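(* Let $\mathcal{K}$ be the fragment of $\mathcal{V}$ whose formulas are generated only by the rules: $\{n\}\in VF(\mathbf{N})$; $(V\mapsto\Phi)\in VF(\tau\to\tau')$ for $V\in\mathit{Val}(\tau)$ and $\Phi$ a computation formula of $\mathcal{K}$ of type $\tau'$; $o\,\phi$ a computation formula for $o\in\mathcal{O}$ and $\phi$ a value formula of $\mathcal{K}$; and closure of value formulas (only) under arbitrary $\bigvee$, $\bigwedge$ and $\neg$ (so computation formulas of $\mathcal{K}$ are exactly the formulas $o\,\phi$). Then the induced logical equivalence $\equiv_{\mathcal{K}}$ coincides with $\equiv_{\mathcal{V}}$.
   Context: Language: simply typed call-by-value language with types $\tau ::= \mathbf{1}\mid\mathbf{N}\mid\tau\to\tau'$, values $*, Z, S(V), \lambda x{:}\tau.M, x$, computations $VW$, $\mathbf{return}\,V$, $\mathbf{let}\,M\Rightarrow x\,\mathbf{in}\,N$, $\mathbf{fix}(V)$, case on naturals, and effect operations from a signature $\Sigma$. $\mathit{Val}(\tau)$, $\mathit{Com}(\tau)$: closed values/computations; $\overline{n}=S^n(Z)$. Each $M\in\mathit{Com}(\tau)$ has an operational effect tree $|M|\in T(\mathit{Val}(\tau))$, where $TX$ is the set of possibly infinite trees with leaves $\bot$ or in $X$ and internal nodes labelled by effect operations. A set $\mathcal{O}$ of modalities is given with $[\![o]\!]\subseteq T\mathbf{1}$; $t[\in P]$ replaces leaves in $P$ by $*$ and other value leaves by $\bot$. Logic $\mathcal{V}$: value formulas $VF(\tau)$, computation formulas $CF(\tau)$: $\{n\}\in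 VF(\mathbf{N})$; $(V\mapsto\Phi)\in VF(\tau\to\tau')$ for $V\in\mathit{Val}(\tau)$, $\Phi\in CF(\tau')$; $o\phi\in CF(\tau)$; both classes closed under arbitrary $\bigwedge,\bigvee,\neg$. $W\models\{n\}$ iff $W=\overline{n}$; $W\models(V\mapsto\Phi)$ iff $WV\models\Phi$; $M\models o\phi$ iff $|M|[\in\{V\mid V\models\phi\}]\in[\![o]\!]$. For a fragment $\mathcal{L}$, two terms of the same type and aspect (value/computation) are $\equiv_{\mathcal{L}}$-equivalent iff they satisfy the same formulas of $\mathcal{L}$. *)

From Stdlib Require Import List Arith ClassicalEpsilon.
Import ListNotations.

Inductive ty : Type := TUnit | TNat | TArr (a b : ty).

Section Language.

(* Signature Sigma of effect operations.  An operation has either a finite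
   arity n (syntax  sigma(M_0,...,M_{n-1}) ) or countable arity
   (syntax  sigma(x:N. M) , children indexed by numerals). *)
Variable Op : Type.
Variable ar : Op -> option nat.

Definition valid_child (s : Op) (i : nat) : bool :=
  match ar s with Some n => Nat.ltb i n | None => true end.

Inductive val : Type :=
| VUnit : val
| VZero : val
| VSucc : val -> val
| VLam : nat -> ty -> com -> val
| VVar : nat -> val
with com : Type :=
| CApp : val -> val -> com
| CRet : val -> com
| CLet : com -> nat -> com -> com
| CFix : ty -> val -> com
| CCase : val -> com -> nat -> com -> com
| COpFin : Op -> list com -> com
| COpNat : Op -> nat -> com -> com.

Fixpoint numeral (n : nat) : val :=
  match n with 0 => VZero | S k => VSucc (numeral k) end.

Definition ctx := list (nat * ty).
Fixpoint lookup (G : ctx) (x : nat) : option ty :=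
  match G with
  | [] => None
  | (y, t) :: G' => if Nat.eqb x y then Some t else lookup G' x
  end.

Inductive vtyped : ctx -> val -> ty -> Prop :=
| TyUnit G : vtyped G VUnit TUnit
| TyZero G : vtyped G VZero TNat
| TySucc G v : vtyped G v TNat -> vtyped G (VSucc v) TNat
| TyLam G x a b m : ctyped ((x, a) :: G) m b -> vtyped G (VLam x a m) (TArr a b)
| TyVar G x t : lookup G x = Some t -> vtyped G (VVar x) t
with ctyped : ctx -> com -> ty -> Prop :=
| TyApp G v w a b : vtyped G v (TArr a b) -> vtyped G w a -> ctyped G (CApp v w) b
| TyRet G v t : vtyped G v t -> ctyped G (CRet v) t
| TyLet G m x n a b : ctyped G m a -> ctyped ((x, a) :: G) n b -> ctyped G (CLet m x n) b
| TyFix G a b v : vtyped G v (TArr (TArr a b) (TArr a b)) -> ctyped G (CFix a v) (TArr a b)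
| TyCase G v m x n t : vtyped G v TNat -> ctyped G m t -> ctyped ((x, TNat) :: G) n t ->
    ctyped G (CCase v m x n) t
| TyOpFin G s ms t : ar s = Some (length ms) -> Forall (fun m => ctyped G m t) ms ->
    ctyped G (COpFin s ms) t
| TyOpNat G s x m t : ar s = None -> ctyped ((x, TNat) :: G) m t -> ctyped G (COpNat s x m) t.

Definition Val (t : ty) := { v : val | vtyped [] v t }.
Definition Com (t : ty) := { c : com | ctyped [] c t }.

(* Substitution of a CLOSED value v for x (no capture possible). *)
Fixpoint subst_v (x : nat) (v : val) (u : val) : val :=
  match u with
  | VUnit => VUnit
  | VZero => VZero
  | VSucc u' => VSucc (subst_v x v u')
  | VLam y t m => VLam y t (if Nat.eqb y x then m else subst_c x v m)
  | VVar y => if Nat.eqb y x then v else VVar y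
  end
with subst_c (x : nat) (v : val) (c : com) : com :=
  match c with
  | CApp u w => CApp (subst_v x v u) (subst_v x v w)
  | CRet u => CRet (subst_v x v u)
  | CLet m y n => CLet (subst_c x v m) y (if Nat.eqb y x then n else subst_c x v n)
  | CFix a u => CFix a (subst_v x v u)
  | CCase u m y n => CCase (subst_v x v u) (subst_c x v m) y
                         (if Nat.eqb y x then n else subst_c x v n)
  | COpFin s ms => COpFin s (map (subst_c x v) ms)
  | COpNat s y m => COpNat s y (if Nat.eqb y x then m else subst_c x v m)
  end.

Fixpoint step (c : com) : option com :=
  match c with
  | CApp (VLam x _ m) w => Some (subst_c x w m)
  | CLet (CRet v) x n => Some (subst_c x v n)
  | CLet (COpFin s ms) x n => Some (COpFin s (map (fun m => CLet m x n) ms))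
  | CLet (COpNat s y m) x n => Some (COpNat s y (CLet m x n))
  | CLet m x n => option_map (fun m' => CLet m' x n) (step m)
  | CFix a v =>
      (* fix(V) --> V (\y:a. let fix(V) => f in f y) *)
      Some (CApp v (VLam 0 a (CLet (CFix a v) 1 (CApp (VVar 1) (VVar 0)))))
  | CCase VZero m _ _ => Some m
  | CCase (VSucc v) _ x n => Some (subst_c x v n)
  | _ => None
  end.

Fixpoint stepn (n : nat) (c : com) : com :=
  match n with
  | 0 => c
  | S k => match step c with Some c' => stepn k c' | None => c end
  end.

Definition terminal (c : com) : bool :=
  match c with CRet _ | COpFin _ _ | COpNat _ _ _ => true | _ => false end.

(* The terminal form reached by c, if any (None = divergence). *)
Definition eval (c : com) : option com :=
  match excluded_middle_informative (exists n, terminal (stepn n c) = true) with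
  | left H => Some (stepn (proj1_sig (constructive_indefinite_description _ H)) c)
  | right _ => None
  end.

(* A tree is
   represented by its labelling of positions (root-first paths). *)
Inductive label (X : Type) : Type :=
| LBot : label X
| LLeaf : X -> label X
| LOp : Op -> label X.
Arguments LBot {X}.
Arguments LLeaf {X} _.
Arguments LOp {X} _.

Definition tree_wf {X : Type} (t : list nat -> option (label X)) : Prop :=
  t [] <> None /\
  forall p i, t (p ++ [i]) <> None <->
              exists s, t p = Some (LOp s) /\ valid_child s i = true.

Definition T (X : Type) := { t : list nat -> option (label X) | tree_wf t }.

Definition child (c : com) (i : nat) : com :=
  match c with
  | COpFin _ ms => nth i ms (CRet VUnit)
  | COpNat _ x m => subst_c x (numeral i) m
  | _ => c
  end.

Fixpoint optree (c : com) (p : list nat) {struct p} : option (label val) :=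
  match eval c with
  | Some (CRet v) => match p with [] => Some (LLeaf v) | _ => None end
  | Some (COpFin s ms) =>
      match p with
      | [] => Some (LOp s)
      | i :: p' => if valid_child s i then optree (child (COpFin s ms) i) p' else None
      end
  | Some (COpNat s x m) =>
      match p with
      | [] => Some (LOp s)
      | i :: p' => if valid_child s i then optree (child (COpNat s x m) i) p' else None
      end
  | _ => match p with [] => Some LBot | _ => None end
  end.

Definition restrict (P : val -> Prop) (t : list nat -> option (label val))
    (p : list nat) : option (label unit) :=
  match t p with
  | None => None
  | Some LBot => Some LBot
  | Some (LLeaf v) =>
      Some (if excluded_middle_informative (P v) then LLeaf tt else LBot)
  | Some (LOp s) => Some (LOp s)
  end.

Variable O : Type.
Variable interp : O -> T unit -> Prop.

Definition modal_sat (o : O) (P : val -> Prop) (c : com) : Prop :=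
  exists h : tree_wf (restrict P (optree c)), interp o (exist _ _ h).

Lemma app_typed a b (W : Val (TArr a b)) (V : Val a) :
  ctyped [] (CApp (proj1_sig W) (proj1_sig V)) b.
Proof. destruct W, V; simpl; econstructor; eauto. Qed.

Definition app {a b} (W : Val (TArr a b)) (V : Val a) : Com b :=
  exist _ _ (app_typed a b W V).

Inductive vform : ty -> Type :=
| FNum : nat -> vform TNat
| FMap : forall a b, Val a -> cform b -> vform (TArr a b)
| VConj : forall t (I : Type), (I -> vform t) -> vform t
| VDisj : forall t (I : Type), (I -> vform t) -> vform t
| VNeg : forall t, vform t -> vform t
with cform : ty -> Type :=
| FMod : forall t, O -> vform t -> cform t
| CConj : forall t (I : Type), (I -> cform t) -> cform t
| CDisj : forall t (I : Type), (I -> cform t) -> cform t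
| CNeg : forall t, cform t -> cform t.

Fixpoint satv (t : ty) (phi : vform t) {struct phi} : Val t -> Prop :=
  match phi in vform t0 return Val t0 -> Prop with
  | FNum n => fun W => proj1_sig W = numeral n
  | FMap a b V Phi => fun W => satc b Phi (app W V)
  | VConj t0 J f => fun W => forall i, satv t0 (f i) W
  | VDisj t0 J f => fun W => exists i, satv t0 (f i) W
  | VNeg t0 psi => fun W => ~ satv t0 psi W
  end
with satc (t : ty) (Phi : cform t) {struct Phi} : Com t -> Prop :=
  match Phi in cform t0 return Com t0 -> Prop with
  | FMod t0 o phi => fun M =>
      modal_sat o (fun v => exists h : vtyped [] v t0, satv t0 phi (exist _ v h))
                (proj1_sig M)
  | CConj t0 J f => fun M => forall i, satc t0 (f i) M
  | CDisj t0 J f => fun M => exists i, satc t0 (f i) M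
  | CNeg t0 Psi => fun M => ~ satc t0 Psi M
  end.

Inductive Kv : forall t, vform t -> Prop :=
| KNum n : Kv TNat (FNum n)
| KMap a b V Phi : Kc b Phi -> Kv (TArr a b) (FMap a b V Phi)
| KConj t I f : (forall i, Kv t (f i)) -> Kv t (VConj t I f)
| KDisj t I f : (forall i, Kv t (f i)) -> Kv t (VDisj t I f)
| KNeg t phi : Kv t phi -> Kv t (VNeg t phi)
with Kc : forall t, cform t -> Prop :=
| KMod t o phi : Kv t phi -> Kc t (FMod t o phi).

Definition vequiv (Lv : forall t, vform t -> Prop) (t : ty) (V W : Val t) : Prop :=
  forall phi : vform t, Lv t phi -> (satv t phi V <-> satv t phi W).
Definition cequiv (Lc : forall t, cform t -> Prop) (t : ty) (M N : Com t) : Prop :=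
  forall Phi : cform t, Lc t Phi -> (satc t Phi M <-> satc t Phi N).

Definition allV : forall t, vform t -> Prop := fun _ _ => True.
Definition allC : forall t, cform t -> Prop := fun _ _ => True.

End Language.

From Pilot Require Import Defs.
From Stdlib Require Import FunctionalExtensionality ClassicalEpsilon.

(* Every value formula of V has a K-equivalent. The only formulas outside K are
   those V |-> Phi whose Phi is a Boolean combination of modal formulas, and
   since W |= V |-> Phi iff W V |= Phi, the operator V |-> - commutes with
   arbitrary conjunctions, disjunctions and negations; pushing it inwards down
   to the modal formulas lands in K. So K-equivalent values are V-equivalent.
   K-equivalent computations satisfy the same o phi for phi in K, hence for
   every phi (replace phi by its K-equivalent), hence the same Boolean
   combinations of modal formulas, i.e. all computation formulas. *)

#[local] Arguments FNum {Op ar O} n.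
#[local] Arguments FMap {Op ar O} a b V Phi.
#[local] Arguments VConj {Op ar O} t I f.
#[local] Arguments VDisj {Op ar O} t I f.
#[local] Arguments VNeg {Op ar O} t phi.
#[local] Arguments FMod {Op ar O} t o phi.
#[local] Arguments CConj {Op ar O} t I f.
#[local] Arguments CDisj {Op ar O} t I f.
#[local] Arguments CNeg {Op ar O} t Phi.

Section FragmentK.

Variable Op : Type.
Variable ar : Op -> option nat.
Variable O : Type.
Variable interp : O -> T Op ar unit -> Prop.

Notation vform := (vform Op ar O).
Notation cform := (cform Op ar O).
Notation Val := (Val Op ar).
Notation Com := (Com Op ar).
Notation satv := (satv Op ar O interp).
Notation satc := (satc Op ar O interp).
Notation Kv := (Kv Op ar O).
Notation Kc := (Kc Op ar O).
Notation vequiv := (vequiv Op ar O interp).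
Notation cequiv := (cequiv Op ar O interp).

Lemma vequiv_antimono (L L' : forall t, vform t -> Prop) t (V W : Val t) :
  (forall t phi, L t phi -> L' t phi) -> vequiv L' t V W -> vequiv L t V W.
Proof. intros HLL' HV phi Hphi; apply HV, HLL', Hphi. Qed.

Lemma cequiv_antimono (L L' : forall t, cform t -> Prop) t (M N : Com t) :
  (forall t Phi, L t Phi -> L' t Phi) -> cequiv L' t M N -> cequiv L t M N.
Proof. intros HLL' HM Phi HPhi; apply HM, HLL', HPhi. Qed.

Lemma vequiv_expressive (L L' : forall t, vform t -> Prop) t (V W : Val t) :
  (forall t (phi : vform t), exists psi, L t psi /\ forall U, satv t psi U <-> satv t phi U) ->
  vequiv L t V W -> vequiv L' t V W.
Proof.
  intros Hexpr HV phi _.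
  destruct (Hexpr t phi) as [psi [Hpsi Hsat]].
  rewrite <- (Hsat V), <- (Hsat W); apply HV, Hpsi.
Qed.

Lemma modal_sat_ext o (P P' : val Op -> Prop) c :
  (forall v, P v <-> P' v) ->
  modal_sat Op ar O interp o P c <-> modal_sat Op ar O interp o P' c.
Proof.
  intros HP.
  assert (Erestrict : restrict Op P (optree Op ar c) = restrict Op P' (optree Op ar c)).
  { apply functional_extensionality; intro p; unfold restrict.
    destruct (optree Op ar c p) as [[| v |]|]; auto.
    destruct (excluded_middle_informative (P v)), (excluded_middle_informative (P' v));
      firstorder. }
  unfold modal_sat; rewrite Erestrict; reflexivity.
Qed.

Lemma satc_FMod_ext t o (phi psi : vform t) (M : Com t) :
  (forall W, satv t phi W <-> satv t psi W) ->
  satc t (FMod t o phi) M <-> satc t (FMod t o psi) M.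
Proof.
  intros Hsat; apply modal_sat_ext; intro v.
  split; intros [Hv Hphi]; exists Hv; apply Hsat, Hphi.
Qed.

Fixpoint to_K {t} (phi : vform t) : vform t :=
  match phi in Defs.vform _ _ _ t0 return vform t0 with
  | FNum n => FNum n
  | FMap a b V Phi => to_K_map V Phi
  | VConj t0 J f => VConj t0 J (fun i => to_K (f i))
  | VDisj t0 J f => VDisj t0 J (fun i => to_K (f i))
  | VNeg t0 psi => VNeg t0 (to_K psi)
  end
with to_K_map {a b} (V : Val a) (Phi : cform b) : vform (TArr a b) :=
  match Phi in Defs.cform _ _ _ b0 return vform (TArr a b0) with
  | FMod t0 o psi => FMap a t0 V (FMod t0 o (to_K psi))
  | CConj t0 J f => VConj _ J (fun i => to_K_map V (f i))
  | CDisj t0 J f => VDisj _ J (fun i => to_K_map V (f i))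
  | CNeg t0 Psi => VNeg _ (to_K_map V Psi)
  end.

Scheme vform_mut_ind := Induction for Defs.vform Sort Prop
with cform_mut_ind := Induction for Defs.cform Sort Prop.

Lemma Kv_to_K t (phi : vform t) : Kv t (to_K phi).
Proof.
  induction phi using vform_mut_ind with
    (P0 := fun b Phi => forall a (V : Val a), Kv (TArr a b) (to_K_map V Phi));
    intros; simpl; repeat constructor; auto.
Qed.

Lemma satv_to_K t (phi : vform t) (W : Val t) : satv t (to_K phi) W <-> satv t phi W.
Proof.
  revert W.
  induction phi using vform_mut_ind with
    (P0 := fun b Phi => forall a (V : Val a) (W : Val (TArr a b)),
             satv _ (to_K_map V Phi) W <-> satc b Phi (app Op ar W V));
    intros; simpl.
  - reflexivity.
  - apply IHphi.
  - split; intros Hf i; apply H, Hf.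
  - split; intros [i Hi]; exists i; apply H, Hi.
  - rewrite IHphi; reflexivity.
  - exact (satc_FMod_ext _ _ _ _ (app Op ar W V) IHphi).
  - split; intros Hf i; apply H, Hf.
  - split; intros [i Hi]; exists i; apply H, Hi.
  - rewrite IHphi; reflexivity.
Qed.

Lemma K_expressive t (phi : vform t) :
  exists psi, Kv t psi /\ forall W, satv t psi W <-> satv t phi W.
Proof. exists (to_K phi); split; [apply Kv_to_K | apply satv_to_K]. Qed.

Lemma cequiv_K_satc t (Phi : cform t) (M N : Com t) :
  cequiv Kc t M N -> satc t Phi M <-> satc t Phi N.
Proof.
  revert M N; induction Phi; intros M N HMN.
  - rewrite !(satc_FMod_ext t o v (to_K v)) by (symmetry; apply satv_to_K).
    apply HMN; constructor; apply Kv_to_K.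
  - split; intros Hf i; apply (H i M N HMN), Hf.
  - split; intros [i Hi]; exists i; apply (H i M N HMN), Hi.
  - simpl; rewrite (IHPhi M N HMN); reflexivity.
Qed.

End FragmentK.

Theorem proposition4p5 (Op : Type) (ar : Op -> option nat)
  (O : Type) (interp : O -> T Op ar unit -> Prop) :
  (forall (t : ty) (V W : Val Op ar t),
     vequiv Op ar O interp (Kv Op ar O) t V W <->
     vequiv Op ar O interp (allV Op ar O) t V W) /\
  (forall (t : ty) (M N : Com Op ar t),
     cequiv Op ar O interp (Kc Op ar O) t M N <->
     cequiv Op ar O interp (allC Op ar O) t M N).
Proof.
  split; intros t V W; split.
  - apply vequiv_expressive, K_expressive.
  - apply vequiv_antimono; constructor.
  - intros HK Phi _; apply cequiv_K_satc, HK.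
  - apply cequiv_antimono; constructor.
Qed.
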